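(* In the manifold decomposition game, the Grundy value of the position consisting of the single surface $ng$ is $G(n0)=0$, $G(n1)=1$, $G(n2)=2$, and for $g\ge 3$: $G(ng)=4$ if $g\equiv 3 \pmod 4$, $G(ng)=6$ if $g\equiv 0\pmod 4$, $G(ng)=0$ if $g\equiv 1\pmod 4$, and $G(ng)=3$ if $g\equiv 2\pmod 4$. (In the paper's notation, the $G$-series of $ng$ is $012\dot{4}60\dot{3}$.)
   Context: Notation: $ng$ is the closed nonorientable surface of genus $g$ (connected sum of $g$ projective planes), $og$ the closed orientable surface of genus $g$, and $n0=o0$ is the sphere. The manifold decomposition game: a position is a finite disjoint union of compact connected surfaces without boundary. Two players alternate moves. A move consists of choosing one component $S$ and performing a proper decomposition of it: choose an essential simple closed curve $J$ on $S$ (not null-homotopic, equivalently not bounding a disk in $S$), take a tubular neighborhood of $J$ (an annulus or a Möbius band), remove its interior, and cap off each resulting boundary circle with a disk; $S$ is replaced by the resulting one or two surfaces. The game ends when every component is a sphere, and the last player able to move wins. The Grundy value $G$ of a position is defined recursively: a position with no moves has value $0$, and otherwise the value is the minimal excluded nonnegative integer (mex) of the values of positions reachable in one move. The $G$-series lists $G(n0),G(n1),G(n2),\dots$; dots over digits indicate a repeating block. *)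

From Stdlib Require Import List Permutation.
From mathcomp Require Import all_boot.

Set Implicit Arguments.
Unset Strict Implicit.
Unset Printing Implicit Defensive.

(* Closed connected surfaces up to homeomorphism (classification theorem):
   [Orient g]    is the orientable surface o_g (Orient 0 is the sphere),
   [NonOrient k] is the nonorientable surface n_(k+1). *)
Inductive surface : Type :=
| Orient of nat
| NonOrient of nat.

Definition ns (g : nat) : surface :=
  match g with 0 => Orient 0 | k.+1 => NonOrient k end.

(* [decomp S R]: R (list of one or two surfaces) is obtainable from S by a
   proper decomposition along an essential simple closed curve J:
   cut along J (annulus or Moebius band neighbourhood) and cap boundary
   circles with disks.  The cases are the possible topological types of
   (J, S), enumerated via the classification of surfaces. *)
Inductive decomp : surface -> seq surface -> Prop :=
(* o_g, J two-sided non-separating: o_(g-1) *)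
| dec_o_nonsep g : decomp (Orient g.+1) [:: Orient g]
(* o_g, J separating (essential): o_a + o_b, a,b >= 1 *)
| dec_o_sep a b : decomp (Orient (a.+1 + b.+1)) [:: Orient a.+1; Orient b.+1]
(* n_h, J one-sided, nonorientable (or sphere) complement: n_(h-1) *)
| dec_n_one_n h : 0 < h -> decomp (ns h) [:: ns h.-1]
(* n_(2b+1), J one-sided, orientable complement: o_b *)
| dec_n_one_o b : decomp (ns (2 * b).+1) [:: Orient b]
(* n_h, J two-sided non-separating, nonorientable complement: n_(h-2) *)
| dec_n_two_n h : 3 <= h -> decomp (ns h) [:: ns (h - 2)]
(* n_(2b+2), J two-sided non-separating, orientable complement: o_b *)
| dec_n_two_o b : decomp (ns (2 * b).+2) [:: Orient b]
(* n_(a+b), J separating into two nonorientable pieces *)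
| dec_n_sep_nn a b : 0 < a -> 0 < b -> decomp (ns (a + b)) [:: ns a; ns b]
(* n_(a+2b), J separating into a nonorientable and an orientable piece *)
| dec_n_sep_no a b : 0 < a -> 0 < b ->
    decomp (ns (a + 2 * b)) [:: ns a; Orient b].

(* A position: finite disjoint union of surfaces (a multiset, order irrelevant). *)
Definition position := seq surface.

Definition move (P Q : position) : Prop :=
  exists (S : surface) (R rest : seq surface),
    Permutation P (S :: rest) /\ decomp S R /\ Permutation Q (R ++ rest).

(* G is a Grundy function: G P = mex { G Q | move P Q } for every position P. *)
Definition is_grundy (G : position -> nat) : Prop :=
  forall P : position,
    (forall Q, move P Q -> G Q <> G P) /\
    (forall m, m < G P -> exists Q, move P Q /\ G Q = m).

(* A position is the disjoint sum of its components, so by the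
   Sprague-Grundy theory its value is the nim-sum of the values of its
   surfaces.  We guess these values -- eventually periodic in the genus, with
   G-series 012(4603) for n_g and 01(20) for o_g -- and check the two defining
   properties of a Grundy function: no decomposition of a surface has the
   surface's own value (a finite check on residues, since every decomposition
   respects the periods), and every smaller value is the nim-value of an
   explicit decomposition.  Grundy functions of a well-founded game are
   unique, so every Grundy function agrees with this one. *)

From Stdlib Require Import Permutation PeanoNat Wf_nat Wellfounded.
From mathcomp Require Import all_boot zify.

Set Implicit Arguments.
Unset Strict Implicit.
Unset Printing Implicit Defensive.

Lemma lxorK a b : Nat.lxor (Nat.lxor a b) b = a.
Proof. by rewrite Nat.lxor_assoc Nat.lxor_nilpotent Nat.lxor_0_r. Qed.

Lemma div2_lxor a b : Nat.div2 (Nat.lxor a b) = Nat.lxor (Nat.div2 a) (Nat.div2 b).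
Proof.
by apply: Nat.bits_inj => n; rewrite Nat.testbit_div2 !Nat.lxor_spec !Nat.testbit_div2.
Qed.

Lemma odd_lxor a b : Nat.odd (Nat.lxor a b) = xorb (Nat.odd a) (Nat.odd b).
Proof. by rewrite -!Nat.bit0_odd Nat.lxor_spec. Qed.

Lemma ltn_div2 a b : (a < b) =
  (Nat.div2 a < Nat.div2 b) || [&& Nat.div2 a == Nat.div2 b, ~~ Nat.odd a & Nat.odd b].
Proof.
rewrite {1}(Nat.div2_odd a) {1}(Nat.div2_odd b).
by case: (Nat.odd a); case: (Nat.odd b) => /=; lia.
Qed.

(* The highest bit at which [m] and [c (+) x] differ is set in exactly one of
   [c] and [x]; the induction finds it by comparing halves first. *)
Lemma lxor_lt_cases c x m :
  m < Nat.lxor c x -> Nat.lxor x m < c \/ Nat.lxor c m < x.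
Proof.
elim/ltn_ind: c x m => c IH x m.
have [->|c_pos] := posnP c; first by rewrite !Nat.lxor_0_l; right.
rewrite ltn_div2 div2_lxor odd_lxor.
case/orP => [lt_half | /and3P[/eqP eq_half m_even cx_odd]].
  have c_half : Nat.div2 c < c by apply/ltP/Nat.lt_div2/ltP.
  by case: (IH _ c_half _ _ lt_half) => lt; [left | right];
    rewrite ltn_div2 div2_lxor lt.
have [c_odd|c_even] := boolP (Nat.odd c); [left | right];
  rewrite ltn_div2 div2_lxor odd_lxor eq_half.
- rewrite Nat.lxor_comm Nat.lxor_assoc Nat.lxor_nilpotent Nat.lxor_0_r ltnn eqxx /=.
  by move: cx_odd m_even; rewrite c_odd; case: (Nat.odd x); case: (Nat.odd m).
- rewrite -Nat.lxor_assoc Nat.lxor_nilpotent Nat.lxor_0_l ltnn eqxx /=.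
  move: cx_odd m_even c_even.
  by case: (Nat.odd c); case: (Nat.odd x); case: (Nat.odd m).
Qed.

Definition nim_sum (s : seq nat) : nat := foldr Nat.lxor 0 s.

Lemma nim_sum_cat s t : nim_sum (s ++ t) = Nat.lxor (nim_sum s) (nim_sum t).
Proof.
elim: s => [|x s IH] /=; first by rewrite Nat.lxor_0_l.
by rewrite IH Nat.lxor_assoc.
Qed.

Lemma nim_sum_perm (T : Type) (v : T -> nat) s t :
  Permutation s t -> nim_sum (map v s) = nim_sum (map v t).
Proof.
elim=> {s t} [|x s t _ IH|x y s|s1 s2 s3 _ IH12 _ IH23] /=; try congruence.
by rewrite -!Nat.lxor_assoc (Nat.lxor_comm (v y)).
Qed.

Lemma nim_sum_lt_split (T : Type) (v : T -> nat) s m :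
  m < nim_sum (map v s) ->
  exists x rest, Permutation s (x :: rest) /\ Nat.lxor (nim_sum (map v rest)) m < v x.
Proof.
elim: s m => [|y s IH] m //= /lxor_lt_cases[lt_y | lt_s]; first by exists y, s.
have [x [rest [perm_s lt_x]]] := IH _ lt_s.
exists x, (y :: rest); split.
  exact: Permutation_trans (perm_skip y perm_s) (perm_swap x y rest).
by rewrite /= (Nat.lxor_comm (v y)) Nat.lxor_assoc.
Qed.

Section GrundyFunctions.

Variables (T : Type) (mv : T -> T -> Prop).

Definition grundy_for (G : T -> nat) : Prop :=
  forall P, (forall Q, mv P Q -> G Q <> G P) /\
            (forall m, m < G P -> exists Q, mv P Q /\ G Q = m).

Hypothesis mv_wf : well_founded (fun Q P => mv P Q).

Lemma grundy_for_unique G1 G2 : grundy_for G1 -> grundy_for G2 -> G1 =1 G2.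
Proof.
move=> grundy1 grundy2; elim/(well_founded_ind mv_wf) => P IH.
have [neq1 below1] := grundy1 P; have [neq2 below2] := grundy2 P.
case: (ltngtP (G1 P) (G2 P)) => // [lt12 | lt21].
- have [Q [PQ G2Q]] := below2 _ lt12.
  by case: (neq1 Q PQ); rewrite IH.
- have [Q [PQ G1Q]] := below1 _ lt21.
  by case: (neq2 Q PQ); rewrite -IH.
Qed.

End GrundyFunctions.

Section NimSumOfComponents.

Variable v : surface -> nat.

Hypothesis decomp_nim_neq : forall S R, decomp S R -> nim_sum (map v R) <> v S.
Hypothesis decomp_nim_below :
  forall S t, t < v S -> exists R, decomp S R /\ nim_sum (map v R) = t.

Lemma nim_sum_grundy : is_grundy (fun P => nim_sum (map v P)).
Proof.
move=> P; split.
- move=> Q [S [R [rest [perm_P [SR perm_Q]]]]].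
  rewrite (nim_sum_perm v perm_P) (nim_sum_perm v perm_Q).
  rewrite map_cat nim_sum_cat /= => eq_sum.
  apply: (decomp_nim_neq SR).
  by rewrite -[LHS](lxorK _ (nim_sum (map v rest))) eq_sum lxorK.
- move=> m /nim_sum_lt_split[S [rest [perm_P lt_S]]].
  have [R [SR val_R]] := decomp_nim_below lt_S.
  exists (R ++ rest); split; first by exists S, R, rest.
  by rewrite map_cat nim_sum_cat val_R (Nat.lxor_comm _ m) lxorK.
Qed.

End NimSumOfComponents.

Definition euler_genus (S : surface) : nat :=
  match S with Orient g => 2 * g | NonOrient k => k.+1 end.

(* Separating cuts preserve the total Euler genus, so components are weighted
   by its square. *)
Definition position_weight (P : position) : nat :=
  sumn [seq euler_genus X ^ 2 | X <- P].

Lemma euler_genus_ns h : euler_genus (ns h) = h.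
Proof. by case: h. Qed.

Lemma decomp_weight S R : decomp S R -> position_weight R < euler_genus S ^ 2.
Proof.
by case=> [g|a b|h h_pos|b|h h_ge3|b|a b a_pos b_pos|a b a_pos b_pos];
  rewrite /position_weight /= ?euler_genus_ns /=; nia.
Qed.

Lemma position_weight_perm P Q :
  Permutation P Q -> position_weight P = position_weight Q.
Proof. by move=> perm_PQ; exact: Permutation_list_sum (Permutation_map _ perm_PQ). Qed.

Lemma move_weight P Q : move P Q -> position_weight Q < position_weight P.
Proof.
move=> [S [R [rest [perm_P [SR perm_Q]]]]].
rewrite (position_weight_perm perm_P) (position_weight_perm perm_Q).
by rewrite /position_weight map_cat sumn_cat ltn_add2r; exact: decomp_weight.
Qed.

Lemma move_wf : well_founded (fun Q P => move P Q).
Proof.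
apply: (wf_incl _ _ (ltof _ position_weight)); last exact: well_founded_ltof.
by move=> Q P /move_weight/ltP.
Qed.

(* With truncated subtraction, [n_residue h] is [h] for [h < 3] and the
   representative of [h] modulo 4 in [3, 6] otherwise; likewise [o_residue g]
   is [g] for [g < 2] and lies in [2, 3] otherwise. *)
Definition n_residue (h : nat) : nat := h - 4 * ((h - 3) %/ 4).
Definition o_residue (g : nat) : nat := g - 2 * ((g - 2) %/ 2).

Definition n_value (h : nat) : nat := nth 0 [:: 0; 1; 2; 4; 6; 0; 3] (n_residue h).
Definition o_value (g : nat) : nat := nth 0 [:: 0; 1; 2; 0] (o_residue g).

Definition surface_value (S : surface) : nat :=
  match S with Orient g => o_value g | NonOrient k => n_value k.+1 end.

Lemma surface_value_ns h : surface_value (ns h) = n_value h.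
Proof. by case: h. Qed.

Lemma n_residue_lt h : n_residue h < 7. Proof. rewrite /n_residue; lia. Qed.
Lemma o_residue_lt g : o_residue g < 4. Proof. rewrite /o_residue; lia. Qed.

Lemma n_residue_gt0 h : (0 < n_residue h) = (0 < h).
Proof. rewrite /n_residue; lia. Qed.
Lemma o_residue_gt0 g : (0 < o_residue g) = (0 < g).
Proof. rewrite /o_residue; lia. Qed.

Lemma n_value_residue h : n_value (n_residue h) = n_value h.
Proof. rewrite /n_value /n_residue; congr nth; lia. Qed.
Lemma o_value_residue g : o_value (o_residue g) = o_value g.
Proof. rewrite /o_value /o_residue; congr nth; lia. Qed.

Lemma n_valueD h h' : n_value (h + h') = n_value (n_residue h + n_residue h').
Proof. rewrite /n_value /n_residue; congr nth; lia. Qed.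
Lemma n_valueD_double h g :
  n_value (h + 2 * g) = n_value (n_residue h + 2 * o_residue g).
Proof. rewrite /n_value /n_residue /o_residue; congr nth; lia. Qed.
Lemma o_valueD g g' : o_value (g + g') = o_value (o_residue g + o_residue g').
Proof. rewrite /o_value /o_residue; congr nth; lia. Qed.

Lemma n_value_period q h : 3 <= h -> n_value (4 * q + h) = n_value h.
Proof. by move=> h_ge3; rewrite /n_value /n_residue; congr nth; lia. Qed.
Lemma o_value_period q g : 2 <= g -> o_value (2 * q + g) = o_value g.
Proof. by move=> g_ge2; rewrite /o_value /o_residue; congr nth; lia. Qed.

Lemma n_value_ge3 h : 3 <= h ->
  n_value h = if h %% 4 == 3 then 4 else if h %% 4 == 0 then 6
              else if h %% 4 == 1 then 0 else 3.
Proof.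
move=> h_ge3; rewrite /n_value (_ : n_residue h = 3 + (h + 1) %% 4).
  by rewrite -modnDml; case: (h %% 4) (ltn_pmod h (isT : 0 < 4)) => [|[|[|[|]]]].
by rewrite /n_residue; lia.
Qed.

Lemma all_iota_lt (p : pred nat) n x : x < n -> all p (iota 0 n) -> p x.
Proof. by move=> x_lt /allP; apply; rewrite mem_iota. Qed.

Lemma all_iota_lt2 (p : nat -> nat -> bool) m n x y : x < m -> y < n ->
  all (fun x => all (p x) (iota 0 n)) (iota 0 m) -> p x y.
Proof. by move=> x_lt y_lt /(all_iota_lt x_lt)/(all_iota_lt y_lt). Qed.

Lemma o_value_succ_neq g : o_value g.+1 != o_value g.
Proof.
rewrite -addn1 o_valueD -(o_value_residue g).
exact: (all_iota_lt (p := fun x => o_value (x + 1) != o_value x) (o_residue_lt g) isT).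
Qed.

Lemma o_value_add_neq a b : 0 < a -> 0 < b ->
  o_value (a + b) != Nat.lxor (o_value a) (o_value b).
Proof.
rewrite -(o_residue_gt0 a) -(o_residue_gt0 b) o_valueD.
rewrite -(o_value_residue a) -(o_value_residue b) => a_pos b_pos.
by have /implyP/(_ a_pos)/implyP/(_ b_pos) := all_iota_lt2 (p := fun x y =>
  (0 < x) ==> (0 < y) ==> (o_value (x + y) != Nat.lxor (o_value x) (o_value y)))
  (o_residue_lt a) (o_residue_lt b) isT.
Qed.

Lemma n_value_succ_neq h : n_value h.+1 != n_value h.
Proof.
rewrite -addn1 n_valueD -(n_value_residue h).
exact: (all_iota_lt (p := fun x => n_value (x + 1) != n_value x) (n_residue_lt h) isT).
Qed.

Lemma n_value_add2_neq h : 0 < h -> n_value h.+2 != n_value h.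
Proof.
rewrite -(n_residue_gt0 h) -addn2 n_valueD -(n_value_residue h) => h_pos.
by have /implyP/(_ h_pos) := all_iota_lt
  (p := fun x => (0 < x) ==> (n_value (x + 2) != n_value x)) (n_residue_lt h) isT.
Qed.

Lemma n_value_odd_neq g : n_value (2 * g).+1 != o_value g.
Proof.
rewrite -add1n n_valueD_double -(o_value_residue g).
exact: (all_iota_lt (p := fun x => n_value (1 + 2 * x) != o_value x) (o_residue_lt g) isT).
Qed.

Lemma n_value_even_neq g : n_value (2 * g).+2 != o_value g.
Proof.
rewrite -add2n n_valueD_double -(o_value_residue g).
exact: (all_iota_lt (p := fun x => n_value (2 + 2 * x) != o_value x) (o_residue_lt g) isT).
Qed.

Lemma n_value_add_neq a b : 0 < a -> 0 < b ->
  n_value (a + b) != Nat.lxor (n_value a) (n_value b).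
Proof.
rewrite -(n_residue_gt0 a) -(n_residue_gt0 b) n_valueD.
rewrite -(n_value_residue a) -(n_value_residue b) => a_pos b_pos.
by have /implyP/(_ a_pos)/implyP/(_ b_pos) := all_iota_lt2 (p := fun x y =>
  (0 < x) ==> (0 < y) ==> (n_value (x + y) != Nat.lxor (n_value x) (n_value y)))
  (n_residue_lt a) (n_residue_lt b) isT.
Qed.

Lemma n_value_add_double_neq a b : 0 < a -> 0 < b ->
  n_value (a + 2 * b) != Nat.lxor (n_value a) (o_value b).
Proof.
rewrite -(n_residue_gt0 a) -(o_residue_gt0 b) n_valueD_double.
rewrite -(n_value_residue a) -(o_value_residue b) => a_pos b_pos.
by have /implyP/(_ a_pos)/implyP/(_ b_pos) := all_iota_lt2 (p := fun x y =>
  (0 < x) ==> (0 < y) ==> (n_value (x + 2 * y) != Nat.lxor (n_value x) (o_value y)))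
  (n_residue_lt a) (o_residue_lt b) isT.
Qed.

Lemma decomp_value_neq S R :
  decomp S R -> nim_sum (map surface_value R) <> surface_value S.
Proof.
case=> [g|a b|h h_pos|g|h h_ge3|g|a b a_pos b_pos|a b a_pos b_pos] /=;
  rewrite ?Nat.lxor_0_r ?surface_value_ns; apply/eqP; rewrite eq_sym.
- exact: o_value_succ_neq.
- exact: o_value_add_neq.
- by case: h h_pos => // h _; exact: n_value_succ_neq.
- exact: n_value_odd_neq.
- case: h h_ge3 => [|[|[|h]]] // _.
  by rewrite subSS subSS subn0; exact: n_value_add2_neq.
- exact: n_value_even_neq.
- exact: n_value_add_neq.
- exact: n_value_add_double_neq.
Qed.

Lemma decomp_n_one_n h h' : h = h'.+1 -> decomp (ns h) [:: ns h'].
Proof. by move=> ->; apply: dec_n_one_n. Qed.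

Lemma decomp_n_two_n h h' : h = h'.+2 -> 0 < h' -> decomp (ns h) [:: ns h'].
Proof.
by move=> -> h'_pos; have := @dec_n_two_n h'.+2; rewrite !subSS subn0; apply.
Qed.

Lemma decomp_n_two_o h g : h = (2 * g).+2 -> decomp (ns h) [:: Orient g].
Proof. by move=> ->; apply: dec_n_two_o. Qed.

Lemma decomp_n_sep_nn h a b :
  h = a + b -> 0 < a -> 0 < b -> decomp (ns h) [:: ns a; ns b].
Proof. by move=> ->; apply: dec_n_sep_nn. Qed.

Lemma decomp_n_sep_no h a b :
  h = a + 2 * b -> 0 < a -> 0 < b -> decomp (ns h) [:: ns a; Orient b].
Proof. by move=> ->; apply: dec_n_sep_no. Qed.

Lemma decomp_o_nonsep g g' : g = g'.+1 -> decomp (Orient g) [:: Orient g'].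
Proof. by move=> ->; apply: dec_o_nonsep. Qed.

Lemma decomp_o_sep g a b :
  g = a + b -> 0 < a -> 0 < b -> decomp (Orient g) [:: Orient a; Orient b].
Proof. by move=> ->; case: a => [|a] // _; case: b => [|b] // _; apply: dec_o_sep. Qed.

Ltac witness R :=
  exists R; split;
  [ first [ apply: decomp_n_one_n; lia | apply: decomp_n_two_n; lia
          | apply: decomp_n_two_o; lia | apply: decomp_n_sep_nn; lia
          | apply: decomp_n_sep_no; lia | apply: decomp_o_nonsep; lia
          | apply: decomp_o_sep; lia ]
  | by rewrite /= ?surface_value_ns ?n_value_period ?o_value_period ].

Lemma n_value_below h t : t < n_value h ->
  exists R, decomp (ns h) R /\ nim_sum (map surface_value R) = t.
Proof.
have [h_small|h_large] := leqP h 6.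
  case: h h_small => [|[|[|[|[|[|[|]]]]]]] // _ t_lt.
  - case: t t_lt => [|] // _.
    witness [:: ns 0].
  - case: t t_lt => [|[|]] // _.
    + witness [:: Orient 0].
    + witness [:: ns 1].
  - case: t t_lt => [|[|[|[|]]]] // _.
    + witness [:: ns 1; Orient 1].
    + witness [:: ns 1].
    + witness [:: ns 2].
    + witness [:: ns 1; ns 2].
  - case: t t_lt => [|[|[|[|[|[|]]]]]] // _.
    + witness [:: ns 2; ns 2].
    + witness [:: Orient 1].
    + witness [:: ns 2].
    + witness [:: ns 2; Orient 1].
    + witness [:: ns 3].
    + witness [:: ns 1; ns 3].
  - case: t t_lt => [|[|[|]]] // _.
    + witness [:: ns 5].
    + witness [:: ns 1; ns 5].
    + witness [:: Orient 2].
have [q [r [-> r_lt]]] : exists q r, h = 4 * q + (r + 7) /\ r < 4.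
  by exists ((h - 7) %/ 4), ((h - 7) %% 4); split; lia.
rewrite n_value_period; last exact: ltn_addl.
case: r r_lt => [|[|[|[|]]]] // _ t_lt.
- case: t t_lt => [|[|[|[|]]]] // _.
  + witness [:: ns (4 * q + 5)].
  + witness [:: ns (4 * q + 5); Orient 1].
  + witness [:: ns 1; ns (4 * q + 6)].
  + witness [:: ns (4 * q + 6)].
- case: t t_lt => [|[|[|[|[|[|]]]]]] // _.
  + witness [:: ns 4; ns (4 * q + 4)].
  + witness [:: ns 2; ns (4 * q + 6)].
  + witness [:: ns (4 * q + 6); Orient 1].
  + witness [:: ns (4 * q + 6)].
  + witness [:: ns (4 * q + 7)].
  + witness [:: ns 1; ns (4 * q + 7)].
- case: t t_lt => [|[|[|]]] // _.
  + witness [:: ns (4 * q + 9)].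
  + witness [:: ns 1; ns (4 * q + 9)].
  + witness [:: Orient (2 * q + 4)].
Qed.

Lemma o_value_below g t : t < o_value g ->
  exists R, decomp (Orient g) R /\ nim_sum (map surface_value R) = t.
Proof.
have [g_small|g_large] := leqP g 3.
  case: g g_small => [|[|[|[|]]]] // _ t_lt.
  - case: t t_lt => [|] // _.
    witness [:: Orient 0].
  - case: t t_lt => [|[|]] // _.
    + witness [:: Orient 1; Orient 1].
    + witness [:: Orient 1].
have [q [r [-> r_lt]]] : exists q r, g = 2 * q + (r + 4) /\ r < 2.
  by exists ((g - 4) %/ 2), ((g - 4) %% 2); split; lia.
rewrite o_value_period; last exact: ltn_addl.
case: r r_lt => [|[|]] // _ t_lt.
case: t t_lt => [|[|]] // _.
- witness [:: Orient (2 * q + 3)].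
- witness [:: Orient 1; Orient (2 * q + 3)].
Qed.

Lemma decomp_value_below S t : t < surface_value S ->
  exists R, decomp S R /\ nim_sum (map surface_value R) = t.
Proof. by case: S => [g|k]; [exact: o_value_below | exact: (@n_value_below k.+1)]. Qed.

Theorem theorem2p4 :
  (exists G : position -> nat, is_grundy G) /\
  (forall G : position -> nat, is_grundy G ->
     G [:: ns 0] = 0 /\ G [:: ns 1] = 1 /\ G [:: ns 2] = 2 /\
     (forall g : nat, 3 <= g ->
        G [:: ns g] =
          (if g %% 4 == 3 then 4
           else if g %% 4 == 0 then 6
           else if g %% 4 == 1 then 0
           else 3))).
Proof.
have value_grundy := nim_sum_grundy decomp_value_neq decomp_value_below.
split; first by exists (fun P => nim_sum (map surface_value P)).
move=> G G_grundy.
have G_ns g : G [:: ns g] = n_value g.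
  rewrite (grundy_for_unique move_wf G_grundy value_grundy) /=.
  by rewrite Nat.lxor_0_r surface_value_ns.
by rewrite !G_ns; do 3!split => //; move=> g /n_value_ge3 <-.
Qed.
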